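(* Assume $L_1\subseteq\bigcup_{\alpha\in\Sigma^\kappa}\Sigma^*\alpha\Sigma^*\bar\alpha$ and $L_2\subseteq\bigcup_{\alpha\in\Sigma^\kappa}\alpha\Sigma^*\bar\alpha\Sigma^*$. Let $M=\mathcal{I}\times\mathcal{F}$ where $\mathcal{I},\mathcal{F}$ are the initial and final states of $\mathcal{A}$; for $\mu=(I,F)\in M$ with $F=((d_1,d_2),e_1,e_2,\kappa)$ let $R_\mu$ be the set of labels of paths in $\mathcal{A}$ from $I$ to $F$ and $B_\mu=B(d_1,d_2,e_1,e_2)$. Let $\sigma=\max_{\mu\in M}\lambda_{B_\mu}$, $\rho=\max_{\mu\in M}\lambda_{R_\mu}$ and $\lambda=\max\{\lambda_{L_1},\lambda_{L_2}\}$. Then $\lambda=\max\{\sigma,\rho\}$.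
   Context: $\Sigma$ is a finite alphabet with at least two letters with an involution $a\mapsto\bar a$ ($\bar{\bar a}=a$), extended to words by $\overline{a_1\cdots a_m}=\bar a_m\cdots\bar a_1$ and to languages elementwise. $\kappa$ is a fixed positive integer. $L_1,L_2$ are regular; $\mathcal{A}_1=(Q_1,\Sigma,E_1,\{q_{01}\},F_1)$ is a complete DFA accepting $L_1$, $\mathcal{A}_2=(Q_2,\Sigma,E_2,\{q_{02}\},F_2)$ a complete DFA accepting $\overline{L_2}$; $p\cdot w$ is the state reached from $p$ on $w$. Growth indicator: $\lambda_L=\inf\{\lambda\ge0:\exists c>0\ \forall m: |L\cap\Sigma^m|\le c\lambda^m\}$. Construction of $\mathcal{A}$: $Q_{12}=\{(q_{01}\cdot w,q_{02}\cdot w):w\in\Sigma^*\}$ with $(p_1,p_2)\cdot w=(p_1\cdot w,p_2\cdot w)$. For $(p_1,p_2,q_1,q_2)\in Q_1\times Q_2\times Q_1\times Q_2$ let $B(p_1,p_2,q_1,q_2)=\{w:p_1\cdot w=q_1,\ p_2\cdot\bar w=q_2\}$; the quadruple is a basic bridge if this set is nonempty. States of $\mathcal{A}$ are all $((p_1,p_2),q_1,q_2,\ell)$ with $(p_1,p_2)\in Q_{12}$, $q_i\in Q_i$, $\ell\in\{0,\dots,\kappa\}$, $(p_1,p_2,q_1,q_2)$ a basic bridge. For $a\in\Sigma$, $P\in Q_{12}$, $q_i\in Q_i$, there is an $a$-arc from $(P,q_1\cdot\bar a,q_2\cdot\bar a,\ell)$ to $(P\cdot a,q_1,q_2,\ell')$,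 provided both are states, exactly when: $\ell=\ell'=0$ and $q_1\cdot\bar a\notin F_1$, $q_2\cdot\bar a\notin F_2$; or $\ell=0,\ell'=1$ and ($q_1\cdot\bar a\in F_1$ or $q_2\cdot\bar a\in F_2$); or $1\le\ell<\kappa$ and $\ell'=\ell+1$. Initial states: $((q_{01},q_{02}),q_1',q_2',0)$; final states: those with $\ell=\kappa$. $\mathcal{A}$ is trimmed: states not reachable from an initial state, or from which no final state is reachable, are removed. *)

From HB Require Import structures.
From mathcomp Require Import all_boot all_order all_algebra.
From mathcomp Require Import boolp classical_sets reals.
Set Implicit Arguments. Unset Strict Implicit. Unset Printing Implicit Defensive.
Import Order.TTheory GRing.Theory Num.Theory.

Record dfa (Σ : finType) := DFA {
  dstate : finType;
  dstep : dstate -> Σ -> dstate;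
  dinit : dstate;
  dfinal : pred dstate }.
Arguments dfinal {Σ} d _.
Arguments dinit {Σ} d.

Section Words.
Variable Σ : finType.

Definition drun (A : dfa Σ) (p : dstate A) (w : seq Σ) : dstate A :=
  foldl (@dstep _ A) p w.

Definition accepts (A : dfa Σ) (w : seq Σ) : bool := dfinal A (drun (dinit A) w).

Definition wbar (bar : Σ -> Σ) (w : seq Σ) : seq Σ := rev (map bar w).

Definition count_len (L : seq Σ -> Prop) (m : nat) : nat :=
  #|[set t : m.-tuple Σ | `[< L (val t) >] ]|.

Definition growth (R : realType) (L : seq Σ -> Prop) : R :=
  inf (fun l : R => (0 <= l)%R /\
        exists c : R, (0 < c)%R /\
          forall m : nat, ((count_len L m)%:R <= c * l ^+ m)%R).

Fixpoint walk (S : Type) (E : S -> Σ -> S -> Prop) (s : S) (w : seq Σ) (t : S)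
  : Prop :=
  match w with
  | [::] => s = t
  | a :: w' => exists s1, E s a s1 /\ walk E s1 w' t
  end.
End Words.

Section Construction.
Variables (Σ : finType) (bar : Σ -> Σ) (kappa : nat) (A1 A2 : dfa Σ).

Definition astate : finType :=
  ((dstate A1 * dstate A2) * dstate A1 * dstate A2 * 'I_kappa.+1)%type.

Definition inQ12 (P : dstate A1 * dstate A2) : Prop :=
  exists w : seq Σ, P = (drun (dinit A1) w, drun (dinit A2) w).

Definition Bset (p1 : dstate A1) (p2 : dstate A2) (q1 : dstate A1)
  (q2 : dstate A2) : seq Σ -> Prop :=
  fun w => drun p1 w = q1 /\ drun p2 (wbar bar w) = q2.

Definition basic_bridge p1 p2 q1 q2 : Prop := exists w, Bset p1 p2 q1 q2 w.

Definition is_state (s : astate) : Prop :=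
  let: (P, q1, q2, l) := s in inQ12 P /\ basic_bridge P.1 P.2 q1 q2.

Definition arc (s : astate) (a : Σ) (t : astate) : Prop :=
  is_state s /\ is_state t /\
  let: (P, r1, r2, l) := s in
  let: (P', q1, q2, l') := t in
  [/\ P' = (dstep P.1 a, dstep P.2 a),
      r1 = dstep q1 (bar a), r2 = dstep q2 (bar a) &
      [\/ [/\ val l = 0, val l' = 0, ~~ dfinal A1 r1 & ~~ dfinal A2 r2],
          [/\ val l = 0, val l' = 1 & (dfinal A1 r1 || dfinal A2 r2)]
        | [/\ 1 <= val l, val l < kappa & val l' = (val l).+1] ] ].

Definition initial (s : astate) : Prop :=
  is_state s /\ s.1.1.1 = (dinit A1, dinit A2) /\ val s.2 = 0.

Definition final (s : astate) : Prop := is_state s /\ val s.2 = kappa.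

Definition trim (s : astate) : Prop :=
  (exists i w, initial i /\ walk arc i w s) /\
  (exists f w, final f /\ walk arc s w f).

Definition tarc (s : astate) (a : Σ) (t : astate) : Prop :=
  arc s a t /\ trim s /\ trim t.

Definition inM (mu : astate * astate) : Prop :=
  [/\ trim mu.1, initial mu.1, trim mu.2 & final mu.2].

Definition Rlang (mu : astate * astate) : seq Σ -> Prop :=
  fun w => walk tarc mu.1 w mu.2.

Definition Blang (mu : astate * astate) : seq Σ -> Prop :=
  let: (P, e1, e2, _) := mu.2 in Bset P.1 P.2 e1 e2.
End Construction.

(* Growth cannot increase under an injection that lengthens all
   words by the same amount, and a finite union or a concatenation of
   languages grows no faster than its fastest part.
   [lambda >= max sigma rho]: a path of the automaton from [I] to a final state
   [F] ends with [kappa] letters [u] whose mirror [wb u] leads the pending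
   states of [F] to acceptance, so [b |-> w b (wb u)] (or [u b (wb w)]) maps
   [B_mu] into [L1] (or [L2]); with a fixed bridge [x] of [F], the map
   [w |-> w x (wb u)] (or [u x (wb w)]) sends [R_mu] into [L1 \/ L2].
   [lambda <= max sigma rho]: in a word [u alpha v (wb alpha)] of [L1] (or the
   mirror of a word of [L2]) the automaton reaches a final state after a prefix
   [y] of [u alpha]; the word then splits as [y], a half of the bridge of that
   final state, and [wb alpha], with growths bounded by [rho], [sigma] and [0]. *)

From Pilot Require Import Defs.
From HB Require Import structures.
From mathcomp Require Import all_boot all_order all_algebra.
From mathcomp Require Import boolp classical_sets reals.
From mathcomp Require Import ring zify.
Import Order.TTheory GRing.Theory Num.Theory.

Set Implicit Arguments. Unset Strict Implicit. Unset Printing Implicit Defensive.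

Section Counting.
Variable Σ : finType.
Implicit Types (X Y : seq Σ -> Prop) (m n : nat).

Definition lang_cat X Y w := exists u v, w = u ++ v /\ X u /\ Y v.

Definition words_of X m : seq (seq Σ) :=
  map val (enum [set t : m.-tuple Σ | `[< X (val t) >]]).

Lemma count_len_words X m : count_len X m = size (words_of X m).
Proof. by rewrite size_map -cardE. Qed.

Lemma words_of_uniq X m : uniq (words_of X m).
Proof. by rewrite map_inj_uniq ?enum_uniq //; exact: val_inj. Qed.

Lemma mem_words_of X m w : (w \in words_of X m) = (size w == m) && `[< X w >].
Proof.
apply/mapP/andP => [[t]|[sw Xw]].
  by rewrite mem_enum inE => Xt ->; rewrite size_tuple.
by exists (Tuple sw); rewrite // mem_enum inE.
Qed.

Lemma count_len_le X m s :
  (forall w, size w = m -> X w -> w \in s) -> count_len X m <= size s.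
Proof.
move=> Xs; rewrite count_len_words; apply: uniq_leq_size (words_of_uniq X m) _.
by move=> w; rewrite mem_words_of => /andP[/eqP sw /asboolP]; exact: Xs.
Qed.

Lemma count_len_ge X m s :
  uniq s -> (forall w, w \in s -> size w = m /\ X w) -> size s <= count_len X m.
Proof.
move=> us sX; rewrite count_len_words; apply: uniq_leq_size us _ => w /sX[sw Xw].
by rewrite mem_words_of sw eqxx; apply/asboolP.
Qed.

Lemma count_len_inj X Y (f : seq Σ -> seq Σ) m k :
  (forall w, X w -> size (f w) = size w + k /\ Y (f w)) ->
  (forall u v, X u -> X v -> size u = size v -> f u = f v -> u = v) ->
  count_len X m <= count_len Y (m + k).
Proof.
move=> fXY f_inj; rewrite count_len_words -(size_map f); apply: count_len_ge.
  rewrite map_inj_in_uniq ?words_of_uniq // => u v.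
  rewrite !mem_words_of => /andP[/eqP su /asboolP Xu] /andP[/eqP sv /asboolP Xv].
  by apply: f_inj; rewrite // su sv.
move=> y /mapP[w]; rewrite mem_words_of => /andP[/eqP sw /asboolP Xw] ->.
by have [-> ?] := fXY w Xw; rewrite sw.
Qed.

Lemma size_flatten_enum (I : finType) (F : I -> seq (seq Σ)) :
  size (flatten [seq F i | i <- enum I]) = \sum_i size (F i).
Proof. by rewrite size_flatten sumnE /shape -map_comp big_map big_enum. Qed.

Lemma count_len_union (I : finType) (X : I -> seq Σ -> Prop) m :
  count_len (fun w => exists i, X i w) m <= \sum_i count_len (X i) m.
Proof.
under eq_bigr do rewrite count_len_words.
rewrite -size_flatten_enum; apply: count_len_le => w sw [i Xiw].
apply/flattenP; exists (words_of (X i) m); first by apply: map_f; rewrite mem_enum.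
by rewrite mem_words_of sw eqxx; apply/asboolP.
Qed.

Lemma count_len_cat X Y n :
  count_len (lang_cat X Y) n <=
  \sum_(a < n.+1) count_len X a * count_len Y (n - a).
Proof.
under eq_bigr do rewrite !count_len_words -(size_allpairs cat).
rewrite -size_flatten_enum; apply: count_len_le => w sw [u [v [wuv [Xu Yv]]]].
have su : size u < n.+1 by rewrite ltnS -sw wuv size_cat leq_addr.
apply/flattenP; eexists; first exact: (map_f _ (mem_enum _ (Ordinal su))).
have sv : size v = n - size u by rewrite -sw wuv size_cat addKn.
rewrite wuv; apply: allpairs_f; rewrite mem_words_of /= ?sv eqxx; exact/asboolP.
Qed.

End Counting.

Section Growth.
Variables (R : realType) (Σ : finType).
Local Open Scope ring_scope.
Implicit Types (X Y : seq Σ -> Prop) (l g e : R).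

Definition bounded_by X l := exists c : R, 0 < c /\
  forall m : nat, (count_len X m)%:R <= c * l ^+ m.

Lemma growth_bounds_nonempty X :
  ([set l : R | 0 <= l /\ bounded_by X l] !=set0)%classic.
Proof.
exists #|Σ|%:R; split; first exact: ler0n.
exists 1; split=> // m; rewrite mul1r -natrX ler_nat -card_tuple.
exact: max_card.
Qed.

Lemma bounded_by_le X l l' : bounded_by X l -> 0 <= l -> l <= l' -> bounded_by X l'.
Proof.
move=> [c [c_gt0 Xc]] l_ge0 ll'; exists c; split=> // m.
by rewrite (le_trans (Xc m)) // ler_pM2l // lerXn2r // nnegrE (le_trans l_ge0).
Qed.

Lemma growth_ge0 X : 0 <= growth R X.
Proof. by apply: lb_le_inf (growth_bounds_nonempty X) _ => l []. Qed.

Lemma growth_le X l : 0 <= l -> bounded_by X l -> growth R X <= l.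
Proof. by move=> l_ge0 Xl; apply: ge_inf; [exists 0 => ? [] | split]. Qed.

Lemma bounded_by_gt X g e : growth R X <= g -> 0 < e -> bounded_by X (g + e).
Proof.
move=> Xg e_gt0; have : growth R X < growth R X + e by rewrite ltrDl.
case/(inf_lt (growth_bounds_nonempty X)) => l [l_ge0 Xl] lt_l.
by apply: bounded_by_le Xl l_ge0 (le_trans (ltW lt_l) _); rewrite lerD2r.
Qed.

Lemma growth_le_eps X g : 0 <= g -> (forall e, 0 < e -> bounded_by X (g + e)) ->
  growth R X <= g.
Proof.
move=> g_ge0 Xg; apply/ler_addgt0Pr => e e_gt0.
by apply: growth_le (Xg e e_gt0); rewrite addr_ge0 // ltW.
Qed.

Lemma growth_le_inj X Y (f : seq Σ -> seq Σ) k :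
  (forall w, X w -> size (f w) = (size w + k)%N /\ Y (f w)) ->
  (forall u v, X u -> X v -> size u = size v -> f u = f v -> u = v) ->
  growth R X <= growth R Y.
Proof.
move=> fXY f_inj; apply: growth_le_eps (growth_ge0 Y) _ => e e_gt0.
have [c [c_gt0 Yc]] := bounded_by_gt (lexx (growth R Y)) e_gt0.
have ge_gt0 : 0 < growth R Y + e by rewrite ltr_wpDl ?growth_ge0.
exists (c * (growth R Y + e) ^+ k); split=> [|m]; first by rewrite mulr_gt0 ?exprn_gt0.
rewrite -mulrA -exprD addnC (le_trans _ (Yc _)) // ler_nat.
exact: count_len_inj fXY f_inj.
Qed.

Lemma growth_le_sub X Y : (forall w, X w -> Y w) -> growth R X <= growth R Y.
Proof.
by move=> XY; apply: (growth_le_inj (f := id) (k := 0)) => // w /XY; rewrite addn0.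
Qed.

Lemma growth_size_eq k : growth R (fun w : seq Σ => size w = k) = 0.
Proof.
apply/eqP; rewrite eq_le growth_ge0 andbT.
apply: (growth_le_eps (g := 0)) => // e e_gt0; rewrite add0r.
have ek_gt0 : 0 < e ^+ k by rewrite exprn_gt0.
exists ((#|Σ| ^ k).+1%:R / e ^+ k); split=> [|m]; first by rewrite divr_gt0.
have [->|mk] := eqVneq m k.
  rewrite divfK ?gt_eqF // ler_nat ltnW // ltnS -card_tuple /count_len.
  exact: max_card.
suff -> : count_len (fun w : seq Σ => size w = k) m = 0%N.
  by rewrite mulr_ge0 ?exprn_ge0 ?divr_ge0 // ltW.
apply/eqP; rewrite cards_eq0; apply/eqP/setP => t; rewrite !inE.
by apply/asboolP; rewrite size_tuple => km; rewrite km eqxx in mk.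
Qed.

Lemma growth_union (I : finType) (X : I -> seq Σ -> Prop) g : 0 <= g ->
  (forall i, growth R (X i) <= g) -> growth R (fun w => exists i, X i w) <= g.
Proof.
move=> g_ge0 Xg; apply: growth_le_eps (g_ge0) _ => e e_gt0.
have /choice[c Xc] : forall i, exists c : R, 0 < c /\
    forall m, (count_len (X i) m)%:R <= c * (g + e) ^+ m.
  by move=> i; exact: bounded_by_gt (Xg i) e_gt0.
exists (\sum_i c i + 1); split=> [|m].
  by rewrite ltr_wpDl // sumr_ge0 // => i _; exact: ltW (Xc i).1.
apply: le_trans (_ : (\sum_i count_len (X i) m)%:R <= _).
  by rewrite ler_nat count_len_union.
rewrite natr_sum mulrDl mul1r mulr_suml.
apply: le_trans (_ : \sum_i c i * (g + e) ^+ m <= _).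
  by apply: ler_sum => i _; exact: (Xc i).2.
by rewrite lerDl; apply: exprn_ge0; rewrite addr_ge0 // ltW.
Qed.

Lemma growth_guard (P : Prop) X g : 0 <= g -> (P -> growth R X <= g) ->
  growth R (fun w => P /\ X w) <= g.
Proof.
move=> g_ge0 PXg; have [/PXg|notP] := pselect P.
  by apply: le_trans; apply: growth_le_sub => w [].
by rewrite (le_trans _ g_ge0) // -(growth_size_eq 0); apply: growth_le_sub => w [].
Qed.

Lemma exprD_ge_natmul (x d : R) n : 0 <= x -> 0 <= d ->
  n.+1%:R * x ^+ n * d <= (x + d) ^+ n.+1.
Proof.
move=> x_ge0 d_ge0; elim: n => [|n IHn]; first by rewrite mul1r expr0 mul1r expr1 lerDr.
have -> : n.+2%:R * x ^+ n.+1 * d = x * (n.+1%:R * x ^+ n * d) + x ^+ n.+1 * d.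
  by rewrite exprS -addn1 natrD; ring.
rewrite [(x + d) ^+ n.+2]exprS mulrDl lerD ?ler_wpM2l // mulrC ler_wpM2l //.
by rewrite lerXn2r ?nnegrE ?addr_ge0 ?lerDl.
Qed.

Lemma growth_or X Y g : 0 <= g -> growth R X <= g -> growth R Y <= g ->
  growth R (fun w => X w \/ Y w) <= g.
Proof.
move=> g_ge0 Xg Yg.
apply: le_trans (growth_union (X := fun b : bool => if b then X else Y) g_ge0 _).
  by apply: growth_le_sub => w [Xw|Yw]; [exists true | exists false].
by case.
Qed.

(* With [x = g + e/2], the convolution of the two bounds is at most
   [(n+1) x^n], which [exprD_ge_natmul] bounds by a multiple of [(g + e)^n]. *)
Lemma growth_cat X Y g : 0 <= g -> growth R X <= g -> growth R Y <= g ->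
  growth R (lang_cat X Y) <= g.
Proof.
move=> g_ge0 Xg Yg; apply: growth_le_eps (g_ge0) _ => e e_gt0.
have e2_gt0 : 0 < e / 2 by rewrite divr_gt0.
have [cX [cX_gt0 Xc]] := bounded_by_gt Xg e2_gt0.
have [cY [cY_gt0 Yc]] := bounded_by_gt Yg e2_gt0.
set x := g + e / 2.
have x_ge0 : 0 <= x by rewrite addr_ge0 // ltW.
have xe : x + e / 2 = g + e by rewrite /x -addrA -splitr.
have ge_gt0 : 0 < g + e by rewrite ltr_wpDl.
exists (cX * cY * ((g + e) / (e / 2))); split=> [|n].
  by rewrite !mulr_gt0 ?invr_gt0.
apply: le_trans (_ : (\sum_(a < n.+1) count_len X a * count_len Y (n - a))%:R <= _).
  by rewrite ler_nat count_len_cat.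
rewrite natr_sum; apply: le_trans (_ : \sum_(a < n.+1) cX * cY * x ^+ n <= _).
  apply: ler_sum => a _; rewrite natrM.
  have -> : cX * cY * x ^+ n = (cX * x ^+ a) * (cY * x ^+ (n - a)).
    by rewrite mulrACA -exprD subnKC // -ltnS.
  by apply: ler_pM => //; rewrite ler0n.
rewrite sumr_const card_ord -mulrnAr -[_ * (g + e) ^+ n]mulrA ler_pM2l ?mulr_gt0 //.
rewrite mulrAC ler_pdivlMr // -exprS -xe -mulr_natl.
exact: exprD_ge_natmul (ltW e2_gt0).
Qed.
End Growth.

Section Words.
Variables (Σ : finType) (bar : Σ -> Σ).
Local Notation wb := (wbar bar).

Lemma drun_cat (A : dfa Σ) (p : dstate A) u v :
  drun p (u ++ v) = drun (drun p u) v.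
Proof. exact: foldl_cat. Qed.

Lemma drun_rcons (A : dfa Σ) (p : dstate A) u a :
  drun p (rcons u a) = dstep (drun p u) a.
Proof. exact: foldl_rcons. Qed.

Lemma wbar_cat u v : wb (u ++ v) = wb v ++ wb u.
Proof. by rewrite /wbar map_cat rev_cat. Qed.

Lemma wbar_cons a u : wb (a :: u) = rcons (wb u) (bar a).
Proof. by rewrite /wbar /= rev_cons. Qed.

Lemma size_wbar u : size (wb u) = size u.
Proof. by rewrite size_rev size_map. Qed.

Lemma wbarK : involutive bar -> involutive wb.
Proof. by move=> barK u; rewrite /wbar map_rev revK -map_comp (eq_map barK) map_id. Qed.

Lemma growth_wbar (R : realType) (X : seq Σ -> Prop) : involutive bar ->
  (growth R (fun w => X (wb w)) <= growth R X)%R.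
Proof.
move=> barK; apply: (@growth_le_inj R _ _ _ wb 0) => [w Xw|u v _ _ _].
  by rewrite size_wbar addn0.
exact: (can_inj (wbarK barK)).
Qed.

Lemma cat_mid_inj (p s s' t t' : seq Σ) :
  size s = size s' -> p ++ s ++ t = p ++ s' ++ t' -> s = s'.
Proof.
by move=> ss' /eqP; rewrite eqseq_cat // eqxx eqseq_cat // => /and3P[_ /eqP].
Qed.

Lemma walk_cat (S : Type) (E : S -> Σ -> S -> Prop) s u v t :
  walk E s (u ++ v) t <-> exists r, walk E s u r /\ walk E r v t.
Proof.
elim: u s => [|a u IHu] s /=; first by split=> [|[r [-> //]]]; exists s.
split=> [[s1 [Es1 /IHu[r [s1r rt]]]]|[r [[s1 [Es1 s1r]] rt]]].
  by exists r; split=> //; exists s1.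
by exists s1; split=> //; apply/IHu; exists r.
Qed.

Lemma walk_sub (S : Type) (E E' : S -> Σ -> S -> Prop) s w t :
  (forall s a t, E s a t -> E' s a t) -> walk E s w t -> walk E' s w t.
Proof.
move=> EE'; elim: w s => [|a w IHw] s //= [s1 [Es1 s1t]].
by exists s1; split; [exact: EE' | exact: IHw].
Qed.

Section Bridges.
Variables (A1 A2 : dfa Σ).
Implicit Types (s : dstate A1) (t : dstate A2).

Lemma Bset_cat p1 p2 q1 q2 s t u v :
  Bset bar p1 t s q2 u -> Bset bar s p2 q1 t v -> Bset bar p1 p2 q1 q2 (u ++ v).
Proof.
move=> [pu tu] [sv pv]; split; first by rewrite drun_cat pu.
by rewrite wbar_cat drun_cat pv.
Qed.

Lemma growth_Bset_left (R : realType) p1 p2 q1 q2 s t v :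
  Bset bar s p2 q1 t v ->
  (growth R (Bset bar p1 t s q2) <= growth R (Bset bar p1 p2 q1 q2))%R.
Proof.
move=> Bv; apply: (@growth_le_inj R _ _ _ (cat^~ v) (size v)) => [u Bu|u u' _ _ su].
  by rewrite size_cat; split=> //; exact: Bset_cat Bu Bv.
by move/(congr1 (take (size u))); rewrite !take_size_cat.
Qed.

Lemma growth_Bset_right (R : realType) p1 p2 q1 q2 s t u :
  Bset bar p1 t s q2 u ->
  (growth R (Bset bar s p2 q1 t) <= growth R (Bset bar p1 p2 q1 q2))%R.
Proof.
move=> Bu; apply: (@growth_le_inj R _ _ _ (cat u) (size u)) => [v Bv|v v' _ _ _].
  by rewrite size_cat addnC; split=> //; exact: Bset_cat Bu Bv.
by move/(congr1 (drop (size u))); rewrite !drop_size_cat.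
Qed.

End Bridges.
End Words.

Section Automaton.
Variables (Σ : finType) (bar : Σ -> Σ) (kappa : nat) (A1 A2 : dfa Σ).
Local Notation wb := (wbar bar).
Local Notation state := (astate kappa A1 A2).
Local Notation arc := (@Defs.arc Σ bar kappa A1 A2).
Local Notation q01 := (dinit A1).
Local Notation q02 := (dinit A2).

Definition firing (s : state) : bool :=
  let: (_, r1, r2, _) := s in dfinal A1 r1 || dfinal A2 r2.

Lemma walk_runs P r1 r2 l w P' q1 q2 l' :
  walk arc (P, r1, r2, l) w (P', q1, q2, l') ->
  [/\ P' = (drun P.1 w, drun P.2 w), r1 = drun q1 (wb w) & r2 = drun q2 (wb w)].
Proof.
elim: w P r1 r2 l => [|a w IHw] P r1 r2 l /=; first by case=> <- <- <- _; case: P.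
move=> [[[[P1 s1] s2] l1] [[_ [_ [-> -> -> _]]] /IHw[-> -> ->]]].
by rewrite !wbar_cons !drun_rcons.
Qed.

Lemma walk_count s w t : walk arc s w t -> (0 < val s.2)%N ->
  val t.2 = (val s.2 + size w)%N.
Proof.
elim: w s => [|a w IHw] s /=; first by move=> <-; rewrite addn0.
case: s => [[[P r1] r2] l] [[[[P1 s1] s2] l1] [[_ [_ [_ _ _ ll1]]] /IHw s1t]] /= l_gt0.
case: ll1 => [[l0]|[l0]|[_ _ l1E]]; rewrite ?l0 // in l_gt0.
by rewrite s1t /= l1E // addSnnS.
Qed.

Lemma walk_count0 s w t : walk arc s w t -> val s.2 = 0%N -> (0 < val t.2)%N ->
  exists w1 u r, [/\ w = w1 ++ u, size u = val t.2, firing r & walk arc r u t].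
Proof.
elim: w s => [|a w IHw] s /=; first by move=> <- ->.
move=> [s1 [sas1 s1t]] s0 t_gt0.
case: s s0 sas1 => [[[P r1] r2] l] /= l0.
case: s1 s1t => [[[P1 u1] u2] l1] s1t sas1; have [_ [_ [_ _ _ ll1]]] := sas1.
case: ll1 => [[_ l10 _ _]|[_ l11 f]|[l_ge1]]; last by move: l_ge1; rewrite /= l0.
  by have [w1 [u [r [-> ? ? ?]]]] := IHw _ s1t l10 t_gt0; exists (a :: w1), u, r.
exists [::], (a :: w), (P, r1, r2, l); split=> //; last by exists (P1, u1, u2, l1).
by rewrite (walk_count s1t) /= l11 // add1n.
Qed.

Hypothesis kappa_gt0 : (0 < kappa)%N.

Lemma walk_accepting i w P e1 e2 l :
  initial bar i -> val l = kappa -> walk arc i w (P, e1, e2, l) ->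
  exists w1 u, [/\ w = w1 ++ u, size u = kappa, P = (drun q01 w, drun q02 w)
    & dfinal A1 (drun e1 (wb u)) || dfinal A2 (drun e2 (wb u))].
Proof.
case: i => [[[Pi r1] r2] li] [_ [/= -> li0]] lk iw.
have [|w1 [u [r [wE su fr ru]]]] := walk_count0 iw li0; first by rewrite /= lk.
have [-> _ _] := walk_runs iw.
case: r fr ru => [[[Pr s1] s2] lr] /= fr /walk_runs[_ s1E s2E].
by exists w1, u; rewrite -s1E -s2E su /=; split.
Qed.

Lemma walk_trim s w t :
  (exists i v, initial bar i /\ walk arc i v s) ->
  (exists f v, final bar f /\ walk arc t v f) ->
  walk arc s w t -> walk (@tarc Σ bar kappa A1 A2) s w t.
Proof.
elim: w s => [|a w IHw] s //= [i [v [ii iv]]] tf [s1 [ss1 s1t]].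
have is1 : exists i v, initial bar i /\ walk arc i v s1.
  exists i, (rcons v a); split=> //; rewrite -cats1; apply/walk_cat.
  by exists s; split=> //; exists s1.
have [f [v' [ff tv']]] := tf.
exists s1; split; last exact: IHw.
split=> //; split; split=> //.
- exists i, v; split=> //.
- exists f, (a :: w ++ v'); split=> //; exists s1; split=> //.
  by apply/walk_cat; exists t.
- exists f, (w ++ v'); split=> //; apply/walk_cat; exists t.
  by split.
Qed.

Lemma walk_tarc_arc s w t :
  walk (@tarc Σ bar kappa A1 A2) s w t -> walk arc s w t.
Proof. by apply: walk_sub => ? ? ? []. Qed.

Section Cut.
Variable x : seq Σ.

(* The state reached after reading [q] in the factorisation [q ++ s ++ x ++ wb s]:
   its pending components are the runs of A1 and A2 over the whole word. *)
Definition cut (q s : seq Σ) (l : nat) : state :=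
  ((drun q01 q, drun q02 q), drun q01 (q ++ s ++ x ++ wb s),
   drun q02 (q ++ s ++ wb x ++ wb s), inord l).

Hypothesis barK : involutive bar.

Lemma cut_state q s l : is_state bar (cut q s l).
Proof.
split; first by exists q.
exists (s ++ x ++ wb s); split; rewrite -drun_cat //.
by rewrite !wbar_cat wbarK // !catA.
Qed.

Lemma arc_cut q a s l l' : (l <= kappa)%N -> (l' <= kappa)%N ->
  [\/ [/\ l = 0%N, l' = 0%N & ~~ firing (cut q (a :: s) l)],
      [/\ l = 0%N, l' = 1%N & firing (cut q (a :: s) l)]
    | [/\ (1 <= l)%N, (l < kappa)%N & l' = l.+1]] ->
  arc (cut q (a :: s) l) a (cut (rcons q a) s l').
Proof.
move=> lk l'k ll'; split; first exact: cut_state.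
split; first exact: cut_state.
rewrite /= !inordK ?ltnS //; split; first by rewrite !drun_rcons.
  1,2: by rewrite wbar_cons -drun_rcons -!cats1 -!catA.
move: ll'; rewrite /firing /= negb_or.
by case=> [[-> -> /andP[]]|[-> ->]|]; [constructor 1 | constructor 2 | constructor 3].
Qed.

Lemma walk_cut_count y q s l : (0 < l)%N -> (l + size y <= kappa)%N ->
  walk arc (cut q (y ++ s) l) y (cut (q ++ y) s (l + size y)).
Proof.
elim: y q l => [|a y IHy] q l l_gt0 /= lyk; first by rewrite cats0 addn0.
exists (cut (rcons q a) (y ++ s) l.+1); split.
  by apply: arc_cut; [lia | lia | constructor 3; split; lia].
by rewrite -cat_rcons -addSnnS; apply: IHy => //; rewrite addSnnS.
Qed.

(* Waiting until the first firing state and then counting [kappa] letters. *)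
Lemma walk_cut_final q p :
  (exists y s, [/\ p = y ++ s, (kappa <= size s)%N & firing (cut (q ++ y) s 0)]) ->
  exists y s, p = y ++ s /\ walk arc (cut q p 0) y (cut (q ++ y) s kappa).
Proof.
elim: p q => [|a p IHp] q [y [s [pE sk fs]]].
  by case: y pE fs => //= sE _; move: sk; rewrite -sE leqNgt kappa_gt0.
have [fq|nfq] := boolP (firing (cut q (a :: p) 0)).
  have pk : (kappa.-1 <= size p)%N.
    by have /= := congr1 size pE; rewrite size_cat; lia.
  exists (a :: take kappa.-1 p), (drop kappa.-1 p).
  split; first by rewrite /= cat_take_drop.
  exists (cut (rcons q a) p 1); split; first by apply: arc_cut => //; constructor 2.
  have := @walk_cut_count (take kappa.-1 p) (rcons q a) (drop kappa.-1 p) 1.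
  by rewrite cat_take_drop size_takel // add1n prednK // -cats1 -catA; apply.
case: y pE fs => [|b y] pE fs.
  by move: pE => /= sE; rewrite cats0 -sE in fs; rewrite fs in nfq.
case: pE => ab pE; rewrite -ab {b ab} in fs.
have [|y' [s' [pE' w']]] := IHp (rcons q a); first by exists y, s; rewrite cat_rcons.
clear pE; subst p.
exists (a :: y'), s'; split=> //=; exists (cut (rcons q a) (y' ++ s') 0); split.
  by apply: arc_cut => //; constructor 1.
by rewrite -cat_rcons.
Qed.

Lemma cut_path p s : (kappa <= size s)%N -> firing (cut p s 0) ->
  exists y t, [/\ p ++ s = y ++ t, inM bar (cut [::] (p ++ s) 0, cut y t kappa)
    & Rlang bar (cut [::] (p ++ s) 0, cut y t kappa) y].
Proof.
move=> sk fs; have [|y [t [pst yw]]] := @walk_cut_final [::] (p ++ s).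
  by exists p, s.
have init : initial bar (cut [::] (p ++ s) 0).
  by split; [exact: cut_state | rewrite /= inordK].
have fin : final bar (cut y t kappa) by split; [exact: cut_state | rewrite /= inordK].
have reach : exists i v, initial bar i /\ walk arc i v (cut [::] (p ++ s) 0).
  by exists (cut [::] (p ++ s) 0), [::].
have coreach : exists f v, final bar f /\ walk arc (cut y t kappa) v f.
  by exists (cut y t kappa), [::].
exists y, t; split=> //; last exact: walk_trim.
split=> //; split=> //.
  by exists (cut y t kappa), y.
by exists (cut [::] (p ++ s) 0), y.
Qed.
End Cut.
End Automaton.

Section Main.
Variables (R : realType) (Σ : finType) (bar : Σ -> Σ) (kappa : nat)
  (A1 A2 : dfa Σ) (L1 L2 : seq Σ -> Prop).
Hypothesis barK : involutive bar.
Hypothesis kappa_gt0 : (0 < kappa)%N.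
Hypothesis L1E : forall w, L1 w <-> accepts A1 w.
Hypothesis L2E : forall w, L2 w <-> accepts A2 (wbar bar w).
Local Open Scope ring_scope.
Local Notation wb := (wbar bar).
Local Notation state := (astate kappa A1 A2).
Local Notation q01 := (dinit A1).
Local Notation q02 := (dinit A2).
Local Notation cut := (@cut Σ bar kappa A1 A2).
Local Notation lambda := (Num.max (growth R L1) (growth R L2)).
Local Notation sigma :=
  (\big[Num.max/0]_(mu | `[< @inM Σ bar kappa A1 A2 mu >]) growth R (Blang bar mu)).
Local Notation rho :=
  (\big[Num.max/0]_(mu | `[< @inM Σ bar kappa A1 A2 mu >]) growth R (Rlang bar mu)).

Lemma lambda_ge0 : 0 <= lambda.
Proof. by rewrite le_max growth_ge0. Qed.

Lemma growth_Blang_le (mu : state * state) :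
  inM bar mu -> growth R (Blang bar mu) <= lambda.
Proof.
case: mu => I [[[P e1] e2] l] [_ _ [[i [w [ii iw]]] _] [_ lk]] /=.
have [w1 [u [_ su -> fire]]] := walk_accepting kappa_gt0 ii lk iw.
rewrite le_max; case/orP: fire => fire; apply/orP; [left | right].
- apply: (@growth_le_inj R _ _ _ (fun b => w ++ b ++ wb u) (size w + kappa)).
    move=> b [/= b1 b2]; rewrite !size_cat size_wbar su; split; first lia.
    by apply/L1E; rewrite /accepts !drun_cat b1.
  by move=> b b' _ _ /cat_mid_inj; apply.
- apply: (@growth_le_inj R _ _ _ (fun b => u ++ b ++ wb w) (size w + kappa)).
    move=> b [/= b1 b2]; rewrite !size_cat size_wbar su; split; first lia.
    by apply/L2E; rewrite /accepts !wbar_cat wbarK // -!catA !drun_cat b2.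
  by move=> b b' _ _ /cat_mid_inj; apply.
Qed.

Lemma growth_Rlang_le (mu : state * state) :
  inM bar mu -> growth R (Rlang bar mu) <= lambda.
Proof.
case: mu => I [[[P e1] e2] l] [/= _ iI _ [[_ [x [x1 x2]]] lk]].
pose sfx (w : seq Σ) := drop (size w - kappa) w.
apply: le_trans (growth_or
  (X := fun w => (kappa <= size w)%N /\ L1 (w ++ x ++ wb (sfx w)))
  (Y := fun w => (kappa <= size w)%N /\ L2 (sfx w ++ x ++ wb w)) lambda_ge0 _ _).
- apply: growth_le_sub => w /walk_tarc_arc /(walk_accepting kappa_gt0 iI lk).
  move=> [w1 [u [wE su PE fire]]].
  have sfxE : sfx w = u by rewrite /sfx wE size_cat su addnK drop_size_cat.
  have kw : (kappa <= size w)%N by rewrite wE size_cat su leq_addl.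
  rewrite sfxE; move: x1 x2; rewrite PE /= => x1 x2.
  case/orP: fire => fire; [left | right]; split=> //.
    by apply/L1E; rewrite /accepts !drun_cat x1.
  by apply/L2E; rewrite /accepts !wbar_cat wbarK // -!catA !drun_cat x2.
- rewrite le_max; apply/orP; left.
  apply: (@growth_le_inj R _ _ _ (fun w => w ++ x ++ wb (sfx w)) (size x + kappa)).
    by move=> w [kw Lw]; rewrite !size_cat size_wbar size_drop; split=> //; lia.
  by move=> w w' _ _ ww' /(cat_mid_inj (p := [::])); apply.
- rewrite le_max; apply/orP; right.
  apply: (@growth_le_inj R _ _ _ (fun w => sfx w ++ x ++ wb w) (size x + kappa)).
    by move=> w [kw Lw]; rewrite !size_cat size_wbar size_drop; split=> //; lia.
  move=> w w' _ _ ww' /(congr1 wb); rewrite !wbar_cat !wbarK // -!catA.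
  by move/(cat_mid_inj (p := [::])); apply.
Qed.

(* For [F = ((d1,d2),e1,e2,l)], a word of [left_half F m] followed by one of
   [right_half F m] is in [B(d1,d2,e1,e2)], by [Bset_cat]. *)
Definition left_half (F : state) (m : dstate A1 * dstate A2) : seq Σ -> Prop :=
  let: (P, _, e2, _) := F in Bset bar P.1 m.2 m.1 e2.

Definition right_half (F : state) (m : dstate A1 * dstate A2) : seq Σ -> Prop :=
  let: (P, e1, _, _) := F in Bset bar m.1 P.2 e1 m.2.

Lemma growth_left_half (mu : state * state) m v : right_half mu.2 m v ->
  growth R (left_half mu.2 m) <= growth R (Blang bar mu).
Proof. by case: mu => I [[[P e1] e2] l]; exact: growth_Bset_left. Qed.

Lemma growth_right_half (mu : state * state) m u : left_half mu.2 m u ->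
  growth R (fun w => right_half mu.2 m (wb w)) <= growth R (Blang bar mu).
Proof.
case: mu => I [[[P e1] e2] l] /= Bu.
exact: le_trans (growth_wbar _ _ barK) (growth_Bset_right _ _ _ Bu).
Qed.

Lemma growth_cover (mid : state * state -> dstate A1 * dstate A2 -> seq Σ -> Prop)
    (ok : state * state -> dstate A1 * dstate A2 -> Prop) :
  (forall mu m, inM bar mu -> ok mu m ->
     growth R (mid mu m) <= growth R (Blang bar mu)) ->
  growth R (fun z => exists mu m, (inM bar mu /\ ok mu m) /\
    lang_cat (Rlang bar mu) (lang_cat (mid mu m) (fun w => size w = kappa)) z)
  <= Num.max sigma rho.
Proof.
move=> mid_le; have M_ge0 : 0 <= Num.max sigma rho.
  by rewrite le_max bigmax_ge_id.
apply: growth_union (M_ge0) _ => mu; apply: growth_union (M_ge0) _ => m.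
apply: growth_guard (M_ge0) _ => -[muM okm].
pose inMb mu := `[< @inM Σ bar kappa A1 A2 mu >].
have muP : inMb mu by apply/asboolP.
have le_sigma := le_bigmax_cond 0 (fun mu => growth R (Blang bar mu)) muP.
have le_rho := le_bigmax_cond 0 (fun mu => growth R (Rlang bar mu)) muP.
apply: growth_cat (M_ge0) _ _; first by rewrite le_max le_rho orbT.
apply: growth_cat (M_ge0) _ _; last by rewrite growth_size_eq.
by rewrite le_max (le_trans (mid_le _ _ muM okm) le_sigma).
Qed.

Hypothesis L1_shape : forall w, L1 w -> exists (alpha : kappa.-tuple Σ) (u v : seq Σ),
  w = u ++ val alpha ++ v ++ wb (val alpha).
Hypothesis L2_shape : forall w, L2 w -> exists (alpha : kappa.-tuple Σ) (u v : seq Σ),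
  w = val alpha ++ u ++ wb (val alpha) ++ v.

(* In [z = u alpha v wb(alpha)], the automaton reads [u alpha] and reaches a
   final state after a prefix [y] with [u alpha = y t]; the rest [t v] of the
   bridge is a left half, completed by the right half [wb t]. *)
Lemma L1_cover z : L1 z -> exists mu m,
  (inM bar mu /\ exists v, right_half mu.2 m v) /\
  lang_cat (Rlang bar mu) (lang_cat (left_half mu.2 m) (fun w => size w = kappa)) z.
Proof.
move=> /[dup] /L1_shape[alpha [u [v ->]]] /L1E z1.
have [||y [t [utE muM Ry]]] := @cut_path _ _ _ A1 A2 kappa_gt0 v barK u (val alpha).
- by rewrite size_tuple.
- by rewrite /firing /=; move: z1; rewrite /accepts => ->.
exists (cut v [::] (u ++ val alpha) 0, cut v y t kappa).
exists (drun q01 (y ++ t ++ v), drun q02 (y ++ t)); split.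
  split=> //; exists (wb t); split; first by rewrite /= -drun_cat -!catA.
  by rewrite wbarK // /= -drun_cat.
exists y, ((t ++ v) ++ wb (val alpha)); split; first by rewrite catA utE -!catA.
split=> //; exists (t ++ v), (wb alpha); split=> //.
split; last by rewrite size_wbar size_tuple.
by split; rewrite /= -drun_cat ?wbar_cat -?catA.
Qed.

Lemma L2_cover z : L2 z -> exists mu m,
  (inM bar mu /\ exists u, left_half mu.2 m u) /\
  lang_cat (Rlang bar mu)
    (lang_cat (fun w => right_half mu.2 m (wb w)) (fun w => size w = kappa)) (wb z).
Proof.
move=> /[dup] /L2_shape[alpha [u [v ->]]] /L2E.
rewrite /accepts !wbar_cat wbarK // -!catA => z2.
have [||y [t [vtE muM Ry]]] :=
  @cut_path _ _ _ A1 A2 kappa_gt0 u barK (wb v) (val alpha).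
- by rewrite size_tuple.
- by rewrite /firing /= z2 orbT.
exists (cut u [::] (wb v ++ val alpha) 0, cut u y t kappa).
exists (drun q01 (y ++ t), drun q02 (y ++ t ++ wb u)); split.
  by split=> //; exists t; split; rewrite /= -drun_cat ?wbar_cat -?catA.
exists y, ((t ++ wb u) ++ wb (val alpha)); split; first by rewrite catA vtE -!catA.
split=> //; exists (t ++ wb u), (wb (val alpha)); split=> //.
split; last by rewrite size_wbar size_tuple.
by split; rewrite /= !wbar_cat !(wbarK barK) -drun_cat -?catA.
Qed.

Lemma growth_max_eq : lambda = Num.max sigma rho.
Proof.
apply/eqP; rewrite eq_le; apply/andP; split.
  rewrite ge_max; apply/andP; split.
    apply: le_trans (growth_cover (mid := fun mu => left_half mu.2)
      (ok := fun mu m => exists v, right_half mu.2 m v) _).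
      by apply: growth_le_sub => z /L1_cover[mu [m [[muM okm] zc]]]; exists mu, m.
    by move=> mu m _ [v]; exact: growth_left_half.
  apply: le_trans (growth_cover (mid := fun mu m w => right_half mu.2 m (wb w))
    (ok := fun mu m => exists u, left_half mu.2 m u) _).
    apply: le_trans (growth_wbar _ _ barK).
    by apply: growth_le_sub => z /L2_cover[mu [m [[muM okm] zc]]]; exists mu, m.
  by move=> mu m _ [u]; exact: growth_right_half.
rewrite ge_max; apply/andP; split; apply: bigmax_le lambda_ge0 _ => mu /asboolP.
  exact: growth_Blang_le.
exact: growth_Rlang_le.
Qed.
End Main.

Theorem lemma12 (R : realType) (Σ : finType) (bar : Σ -> Σ) (kappa : nat)
  (A1 A2 : dfa Σ) (L1 L2 : seq Σ -> Prop) :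
  1 < #|Σ| ->
  (forall a, bar (bar a) = a) ->
  0 < kappa ->
  (forall w, L1 w <-> accepts A1 w) ->
  (forall w, L2 w <-> accepts A2 (wbar bar w)) ->
  (forall w, L1 w -> exists (alpha : kappa.-tuple Σ) (u v : seq Σ),
      w = u ++ val alpha ++ v ++ wbar bar (val alpha)) ->
  (forall w, L2 w -> exists (alpha : kappa.-tuple Σ) (u v : seq Σ),
      w = val alpha ++ u ++ wbar bar (val alpha) ++ v) ->
  let sigma : R := \big[Num.max/0%R]_(mu | `[< @inM Σ bar kappa A1 A2 mu >])
                     growth R (@Blang Σ bar kappa A1 A2 mu) in
  let rho : R := \big[Num.max/0%R]_(mu | `[< @inM Σ bar kappa A1 A2 mu >])
                     growth R (@Rlang Σ bar kappa A1 A2 mu) in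
  Num.max (growth R L1) (growth R L2) = Num.max sigma rho.
Proof.
move=> _ barK kappa_gt0 L1E L2E L1_shape L2_shape sigma rho.
exact: growth_max_eq barK kappa_gt0 L1E L2E L1_shape L2_shape.
Qed.
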